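(* Let $(G,\sigma)$ be a colored planar, color-connected graph with vertices $s,t$ connected in $G$. If $\pi^*$ is an $s$-$t$ path minimizing $|\sigma(\pi^* )|$ and $C^*$ is a color-hitting set of minimum cardinality, then $|\sigma(\pi^* )|=|C^*|$.
   Context: $G=(V,E)$ finite undirected, $\sigma:V\to 2^{[m]}$, $\sigma(\pi)=\bigcup_{v\in\pi}\sigma(v)$. Color-connected: for each color $c$ the vertices whose color set contains $c$ induce a connected subgraph. $V(C)=\{v:\sigma(v)\cap C\ne\emptyset\}$. $S\subseteq[m]$ is an $s$-$t$ color separator if no $s$-$t$ path in $G$ avoids $V(S)$. A color-hitting set is a set $C\subseteq[m]$ with $C\cap S\ne\emptyset$ for all $s$-$t$ color separators $S$. *)

From Stdlib Require Import Reals.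
From mathcomp Require Import all_boot.

Set Implicit Arguments.
Unset Strict Implicit.
Unset Printing Implicit Defensive.

Definition simple_graph (V : finType) (e : rel V) : Prop :=
  symmetric e /\ irreflexive e.

Definition point := (R * R)%type.

Definition cont_curve (g : R -> point) : Prop :=
  (forall x, continuity_pt (fun y => fst (g y)) x) /\
  (forall x, continuity_pt (fun y => snd (g y)) x).

Definition in01 (x : R) : Prop := Rle 0 x /\ Rle x 1.
Definition in01o (x : R) : Prop := Rlt 0 x /\ Rlt x 1.

Definition planar (V : finType) (e : rel V) : Prop :=
  exists (pos : V -> point) (arc : V -> V -> R -> point),
    injective pos /\
    forall u v, e u v ->
      cont_curve (arc u v) /\
          arc u v R0 = pos u /\ arc u v R1 = pos v /\
          (forall x, arc v u x = arc u v (Rminus 1 x)) /\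
          (forall x y, in01 x -> in01 y -> arc u v x = arc u v y -> x = y) /\
          (forall x w, in01o x -> arc u v x <> pos w) /\
          (forall u' v' x y, e u' v' -> ~ (u' = u /\ v' = v) ->
             ~ (u' = v /\ v' = u) -> in01o x -> in01o y ->
             arc u v x <> arc u' v' y).

Definition colors_of (V : finType) (m : nat) (sigma : V -> {set 'I_m})
    (p : seq V) : {set 'I_m} :=
  \bigcup_(v <- p) sigma v.

(* p is a list of vertices x :: p forming an s-t path (walk) in e:
   the path is s :: p, with consecutive vertices adjacent, ending at t. *)
Definition st_path (V : finType) (e : rel V) (s t : V) (p : seq V) : Prop :=
  path e s p /\ last s p = t.

Definition path_vertices (V : finType) (s : V) (p : seq V) : seq V := s :: p.

Definition color_connected (V : finType) (e : rel V) (m : nat)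
    (sigma : V -> {set 'I_m}) : Prop :=
  forall c : 'I_m, forall u v : V, c \in sigma u -> c \in sigma v ->
    exists p : seq V,
      [/\ path e u p, last u p = v & all (fun w => c \in sigma w) p].

Definition VC (V : finType) (m : nat) (sigma : V -> {set 'I_m})
    (C : {set 'I_m}) : {set V} :=
  [set v | [exists c in C, c \in sigma v]].

Definition color_separator (V : finType) (e : rel V) (m : nat)
    (sigma : V -> {set 'I_m}) (s t : V) (S : {set 'I_m}) : Prop :=
  forall p : seq V, st_path e s t p ->
    has (fun v => v \in VC sigma S) (path_vertices s p).

Definition color_hitting_set (V : finType) (e : rel V) (m : nat)
    (sigma : V -> {set 'I_m}) (s t : V) (C : {set 'I_m}) : Prop :=
  forall S : {set 'I_m}, color_separator e sigma s t S -> C :&: S != set0.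

From Stdlib Require Import Reals Classical.
From mathcomp Require Import all_boot.

Set Implicit Arguments.
Unset Strict Implicit.
Unset Printing Implicit Defensive.

(* The colors of any s-t path meet every color separator, so they form a
   hitting set.  Conversely, if C hits every separator then its complement is
   not a separator, so some s-t path avoids V(~: C), i.e. uses only colors of C. *)

Section ColorDuality.

Variables (V : finType) (e : rel V) (m : nat) (sigma : V -> {set 'I_m}).
Variables (s t : V).

Lemma in_VC (C : {set 'I_m}) (v : V) :
  (v \in VC sigma C) = (sigma v :&: C != set0).
Proof.
rewrite inE; apply/existsP/set0Pn => [[c /andP [cC cv]] | [c]].
  by exists c; rewrite inE cv cC.
by rewrite inE => /andP [cv cC]; exists c; rewrite cC cv.
Qed.

Lemma colors_of_subset (p : seq V) (C : {set 'I_m}) :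
  (colors_of sigma p \subset C) = all (fun v => sigma v \subset C) p.
Proof. by rewrite /colors_of bigcup_seq; apply/bigcupsP/allP => sub v /sub. Qed.

Lemma colors_of_hitting_set (p : seq V) :
  st_path e s t p -> color_hitting_set e sigma s t (colors_of sigma (path_vertices s p)).
Proof.
move=> st_p S sepS; have /hasP [v vp] := sepS _ st_p.
rewrite in_VC => /set0Pn [c]; rewrite inE => /andP [cv cS].
apply/set0Pn; exists c; rewrite inE cS andbT /colors_of bigcup_seq.
by apply/bigcupP; exists v.
Qed.

Lemma hitting_setC_not_separator (C : {set 'I_m}) :
  color_hitting_set e sigma s t C -> ~ color_separator e sigma s t (~: C).
Proof. by move=> hitC /hitC; rewrite setICr eqxx. Qed.

Lemma not_separator_avoiding_path (S : {set 'I_m}) :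
  ~ color_separator e sigma s t S ->
  exists2 p, st_path e s t p & colors_of sigma (path_vertices s p) \subset ~: S.
Proof.
move=> /not_all_ex_not [p not_sep]; have [st_p /negP] := imply_to_and _ _ not_sep.
rewrite -all_predC => /allP avoidS; exists p => //.
rewrite colors_of_subset; apply/allP => v /avoidS /=.
by rewrite in_VC negbK setI_eq0 subsets_disjoint setCK.
Qed.

Lemma hitting_set_colors_path (C : {set 'I_m}) :
  color_hitting_set e sigma s t C ->
  exists2 p, st_path e s t p & colors_of sigma (path_vertices s p) \subset C.
Proof.
move=> /hitting_setC_not_separator /not_separator_avoiding_path [p st_p].
by rewrite setCK; exists p.
Qed.

End ColorDuality.

Theorem lemma2p2 (V : finType) (e : rel V) (m : nat)
    (sigma : V -> {set 'I_m}) (s t : V)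
    (Hsimple : simple_graph e) (Hplanar : planar e)
    (Hcc : color_connected e sigma)
    (Hst : exists p : seq V, st_path e s t p)
    (pstar : seq V) (Hpstar : st_path e s t pstar)
    (Hpmin : forall p : seq V, st_path e s t p ->
       #|colors_of sigma (path_vertices s pstar)| <= #|colors_of sigma (path_vertices s p)|)
    (Cstar : {set 'I_m}) (HC : color_hitting_set e sigma s t Cstar)
    (HCmin : forall C : {set 'I_m}, color_hitting_set e sigma s t C ->
       #|Cstar| <= #|C|) :
  #|colors_of sigma (path_vertices s pstar)| = #|Cstar|.
Proof.
apply/eqP; rewrite eqn_leq; apply/andP; split.
- have [p st_p colors_p_sub] := hitting_set_colors_path HC.
  exact: leq_trans (Hpmin _ st_p) (subset_leq_card colors_p_sub).
- exact/HCmin/colors_of_hitting_set.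
Qed.
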